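(* Let $X$ be a nonempty discrete (finite or countable) set and $p^*$ a probability distribution on $X$ (the ground truth). Let $X^{\checkmark}=\{x\in X: p^*(x)>0\}$ (valid points) and $X^{\times}=\{x\in X:p^*(x)=0\}$ (invalid points). Let $x_1,\dots,x_N\in X^{\checkmark}$ ($N\ge1$) and $q(x)=\frac1N\#\{i:x_i=x\}$. Let $\hat p^*$ be any probability distribution on $X$ maximizing $\mathbb{E}_{q(x)}[p(x)]=\frac1N\sum_{i=1}^N p(x_i)$ over all probability distributions $p$ on $X$. Then $\hat p^*$ is sound: for all $x\in X$, $\hat p^*(x)>0$ implies $x\in X^{\checkmark}$ (equivalently, $x\in X^{\times}$ implies $\hat p^*(x)=0$).
   Context: A probability distribution on $X$ is $p:X\to[0,\infty)$ with $\sum_x p(x)=1$. A distribution $p$ ''proves'' $x$ when $p(x)>0$; $p$ is sound if every point it proves is valid. *)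

From HB Require Import structures.
From mathcomp Require Import all_boot all_order all_algebra.
From mathcomp Require Import all_classical all_reals all_analysis.
Set Implicit Arguments. Unset Strict Implicit. Unset Printing Implicit Defensive.
Import Order.TTheory GRing.Theory Num.Theory.
Local Open Scope classical_set_scope.
Local Open Scope ring_scope.

Definition is_distr (R : realType) (X : countType) (p : X -> R) : Prop :=
  (forall x, 0 <= p x) /\ (\esum_(x in [set: X]) (p x)%:E = 1%E).

Definition sound (R : realType) (X : countType) (pstar p : X -> R) : Prop :=
  forall x, 0 < p x -> 0 < pstar x.

Definition emp_obj (R : realType) (X : countType) (N : nat) (xs : 'I_N -> X)
  (p : X -> R) : R := N%:R^-1 * \sum_(i < N) p (xs i).

(* If a maximiser [phat] of the empirical objective put mass [c > 0] on a point [y]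
   hit by no sample, moving that mass onto a sample point would give another
   distribution whose objective is larger by at least [c / N]. So [phat] vanishes
   off the samples, and the samples are valid points. *)

From HB Require Import structures.
From mathcomp Require Import all_boot all_order all_algebra.
From mathcomp Require Import all_classical all_reals all_analysis.

Import Order.TTheory GRing.Theory Num.Theory.
Local Open Scope classical_set_scope.
Local Open Scope ring_scope.

Section MoveMass.
Set Implicit Arguments.
Unset Strict Implicit.
Variables (R : realType) (X : countType).

Definition move_mass (p : X -> R) (y a : X) (x : X) : R :=
  (if x == y then 0 else p x) + (if x == a then p y else 0).

Lemma esum_point (y : X) (c : R) : 0 <= c ->
  (\esum_(x in [set: X]) ((if x == y then c else 0)%:E) = c%:E)%E.
Proof.
move=> c_ge0.
rewrite (eq_esum (b := fun x => if x \in [set y] then c%:E else 0%E)).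
  by rewrite -esum_mkcond esum_set1.
by move=> x _; case: eqP => [->|xNy]; [rewrite mem_set | rewrite memNset].
Qed.

Lemma move_mass_ge0 (p : X -> R) (y a : X) :
  (forall x, 0 <= p x) -> forall x, 0 <= move_mass p y a x.
Proof.
by move=> p_ge0 x; rewrite addr_ge0 //; case: eqP.
Qed.

Lemma esum_move_mass (p : X -> R) (y a : X) : (forall x, 0 <= p x) ->
  (\esum_(x in [set: X]) (move_mass p y a x)%:E =
   \esum_(x in [set: X]) (p x)%:E)%E.
Proof.
(* Both sides split as the mass of [p] off [y] plus the point mass [p y]. *)
move=> p_ge0.
have off_ge0 x : 0 <= if x == y then 0 else p x by case: eqP.
have at_ge0 (b : X) x : 0 <= if x == b then p y else 0 by case: eqP.
rewrite [RHS](eq_esum (b := fun x =>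
    ((if x == y then 0 else p x)%:E + (if x == y then p y else 0)%:E)%E)); last first.
  by move=> x _; rewrite -EFinD; case: eqP => [->|_]; rewrite ?add0r ?addr0.
rewrite /move_mass (eq_esum (fun x _ => EFinD _ _)).
by rewrite !esumD => [|x _|x _|x _|x _]; rewrite ?lee_fin ?esum_point.
Qed.

Lemma is_distr_move_mass (p : X -> R) (y a : X) :
  is_distr p -> is_distr (move_mass p y a).
Proof.
move=> [p_ge0 p_sum1]; split; first exact: move_mass_ge0.
by rewrite esum_move_mass.
Qed.

Lemma sum_move_mass_to_sample (N : nat) (xs : 'I_N -> X) (i0 : 'I_N)
    (p : X -> R) (y : X) :
  0 <= p y -> (forall i, xs i != y) ->
  \sum_(i < N) p (xs i) + p y <= \sum_(i < N) move_mass p y (xs i0) (xs i).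
Proof.
move=> py_ge0 xsNy.
have -> : \sum_(i < N) move_mass p y (xs i0) (xs i) =
    \sum_(i < N) p (xs i) + \sum_(i < N) (if xs i == xs i0 then p y else 0).
  by rewrite -big_split; apply: eq_bigr => i _; rewrite /move_mass (negbTE (xsNy i)).
rewrite lerD2l (bigD1 i0) //= eqxx lerDl.
by apply: sumr_ge0 => i _; case: eqP.
Qed.

Lemma emp_obj_argmax_eq0_off_samples (N : nat) (hN : (0 < N)%N)
    (xs : 'I_N -> X) (phat : X -> R) :
  is_distr phat ->
  (forall p : X -> R, is_distr p -> emp_obj xs p <= emp_obj xs phat) ->
  forall y, (forall i, xs i != y) -> phat y = 0.
Proof.
move=> hphat hmax y xsNy.
have phat_y_ge0 := hphat.1 y.
have := hmax _ (is_distr_move_mass y (xs (Ordinal hN)) hphat).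
rewrite /emp_obj ler_pM2l ?invr_gt0 ?ltr0n // => move_le.
have := le_trans (sum_move_mass_to_sample (Ordinal hN) phat_y_ge0 xsNy) move_le.
by rewrite gerDl => phat_y_le0; apply/eqP; rewrite eq_le phat_y_le0.
Qed.

End MoveMass.

Theorem mainTheorem4 (R : realType) (X : countType) (x0 : X)
  (pstar : X -> R) (hpstar : is_distr pstar)
  (N : nat) (hN : (0 < N)%N) (xs : 'I_N -> X)
  (hvalid : forall i, 0 < pstar (xs i))
  (phat : X -> R) (hphat : is_distr phat)
  (hmax : forall p : X -> R, is_distr p -> emp_obj xs p <= emp_obj xs phat) :
  sound pstar phat.
Proof.
move=> y phat_y_gt0.
have [i /eqP <- //|xsNy] := pickP (fun i => xs i == y).
suff phat_y0 : phat y = 0 by rewrite phat_y0 ltxx in phat_y_gt0.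
by apply: (emp_obj_argmax_eq0_off_samples hN hphat hmax) => i; rewrite xsNy.
Qed.
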